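(* Let $X$ be a random vector and $\epsilon$ a random variable, independent, and let $Y=h(X)+\epsilon$ for a Borel function $h$, where $\epsilon$ has a density with respect to Lebesgue measure on $\mathbb{R}$ and $X$ has a density with respect to a $\sigma$-finite Borel measure. Let $u_{h(X)}=\sup\{u: F_{h(X)}(u)<1\}$ and suppose the CDF of $h(X)$ is continuous on the interval $(u,u_{h(X)}]$ for some $u<u_{h(X)}$. Then \[ \lambda^{(\mathrm{opt})}(Y,X)=\limsup_{p\uparrow1}\mathbb{P}\big[Y>F_Y^{\leftarrow}(p)\,\big|\,h(X)>F_{h(X)}^{\leftarrow}(p)\big], \] so $h(X)$ is an optimal extremal predictor for the extreme events of $Y$. In particular, if the tail dependence coefficient $\lambda(Y,h(X))$ exists, then $\lambda^{(\mathrm{opt})}(Y,X)=\lambda(Y,h(X))$.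
   Context: $F_\xi$ is the CDF of $\xi$ and $F_\xi^{\leftarrow}(p)=\inf\{y:F_\xi(y)\ge p\}$. For $p\in(0,1)$, $\mathcal{C}_p(X)$ is the class of Borel functions $g$ with $\mathbb{P}[g(X)>F_{g(X)}^{\leftarrow}(p)]=1-p$. The optimal extremal precision is \[ \lambda^{(\mathrm{opt})}(Y,X)=\limsup_{p\uparrow1}\sup_{g\in\mathcal{C}_p(X)}\mathbb{P}\big(Y>F_Y^{\leftarrow}(p)\mid g(X)>F_{g(X)}^{\leftarrow}(p)\big). \] A random variable $h(X)$ is an optimal extremal predictor if $\lambda^{(\mathrm{opt})}(Y,X)=\limsup_{p\uparrow1}\mathbb{P}(Y>F_Y^{\leftarrow}(p)\mid h(X)>F_{h(X)}^{\leftarrow}(p))$. The tail dependence coefficient is $\lambda(\xi,\eta)=\lim_{p\uparrow1}\mathbb{P}[\xi>F_\xi^{\leftarrow}(p)\mid \eta>F_\eta^{\leftarrow}(p)]$ when the limit exists. *)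

From HB Require Import structures.
From mathcomp Require Import all_boot all_order all_algebra.
From mathcomp Require Import all_classical all_reals all_analysis.
Set Implicit Arguments. Unset Strict Implicit. Unset Printing Implicit Defensive.
Import Order.TTheory GRing.Theory Num.Theory.
Import numFieldNormedType.Exports.
Local Open Scope classical_set_scope.
Local Open Scope ring_scope.

Section defs.
Context {R : realType} {dT : measure_display} {T : measurableType dT}.
Variable P : probability T R.

Definition distr_fun (xi : T -> R) (y : R) : R := fine (P [set t | xi t <= y]).

Definition gen_inverse (xi : T -> R) (p : R) : R := inf [set y | p <= distr_fun xi y].

Definition exceed (xi : T -> R) (p : R) : set T :=
  [set t | gen_inverse xi p < xi t].

Definition condprob (A B : set T) : R := fine (P (A `&` B)) / fine (P B).

Definition upper_end (xi : T -> R) : \bar R :=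
  ereal_sup [set u%:E | u in [set u | distr_fun xi u < 1]].

Definition indep {d1 d2} {U1 : measurableType d1} {U2 : measurableType d2}
  (X1 : T -> U1) (X2 : T -> U2) : Prop :=
  forall (A : set U1) (B : set U2), measurable A -> measurable B ->
    P (X1 @^-1` A `&` X2 @^-1` B) = (P (X1 @^-1` A) * P (X2 @^-1` B))%E.

Definition has_density {d1} {U : measurableType d1} (Z : T -> U)
  (mu : {measure set U -> \bar R}) : Prop :=
  exists f : U -> R, measurable_fun setT f /\ (forall x, 0 <= f x) /\
    forall A, measurable A -> P (Z @^-1` A) = (\int[mu]_(x in A) (f x)%:E)%E.

Definition has_lebesgue_density (Z : T -> R) : Prop :=
  exists f : measurableTypeR R -> R, measurable_fun setT f /\ (forall x, 0 <= f x) /\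
    forall A : set (measurableTypeR R), measurable A ->
      P (Z @^-1` A) = (\int[@lebesgue_measure R]_(x in A) (f x)%:E)%E.

Definition Cp {d1} {U : measurableType d1} (X : T -> U) (p : R) : set (U -> R) :=
  [set g | measurable_fun setT g /\ fine (P (exceed (g \o X) p)) = 1 - p].

End defs.

Definition limsup_left1 {R : realType} (f : R -> \bar R) : \bar R :=
  ereal_inf [set ereal_sup (f @` [set p | 1 - δ < p < 1]) | δ in [set δ : R | 0 < δ < 1]].

Definition lambda_opt {R : realType} {dT} {T : measurableType dT} (P : probability T R)
  {d1} {U : measurableType d1} (Y : T -> R) (X : T -> U) : \bar R :=
  limsup_left1 (fun p => ereal_sup
    [set (condprob P (exceed P Y p) (exceed P (g \o X) p))%:E | g in Cp P X p]).

From HB Require Import structures.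
From mathcomp Require Import all_boot all_order all_algebra.
From mathcomp Require Import all_classical all_reals all_analysis.
From mathcomp Require Import lra measurable_realfun.
Import Order.TTheory GRing.Theory Num.Theory.
Import numFieldNormedType.Exports.
Local Open Scope classical_set_scope.
Local Open Scope ring_scope.

(* For p close to 1, continuity of F_{h(X)} near its upper end puts h itself in
   C_p(X), so it suffices that h maximizes the conditional precision over C_p(X).
   This is a Neyman-Pearson argument: by independence P[Y > q | X = x] =
   P[eps > q - h(x)] is nondecreasing in h(x), so among the events {X \in G} of
   probability P[h(X) > c] the upper level set of h catches the most of {Y > q}.
   Concretely, the parts of {X \in G} and {h(X) > c} outside each other have equal
   probability; on the first, Y > q forces eps > q - c, while on the second
   eps > q - c implies Y > q. *)

Section measurable_preimages.
Context {R : realType} {d : measure_display} {U : measurableType d}.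

Lemma measurable_funT_preimage {d'} {V : measurableType d'} {f : U -> V} {B} :
  measurable_fun setT f -> measurable B -> measurable (f @^-1` B).
Proof. by move=> mf mB; rewrite -[f @^-1` B]setTI; exact: mf. Qed.

Lemma measurable_fun_gt (f : U -> R) a :
  measurable_fun setT f -> measurable [set x | a < f x].
Proof.
by move=> mf; rewrite -preimage_itvoy; exact: measurable_funT_preimage mf (measurable_itv _).
Qed.

Lemma measurable_fun_le (f : U -> R) a :
  measurable_fun setT f -> measurable [set x | f x <= a].
Proof.
by move=> mf; rewrite -preimage_itvNyc; exact: measurable_funT_preimage mf (measurable_itv _).
Qed.

End measurable_preimages.

Section fine_probability.
Context {R : realType} {dT : measure_display} {T : measurableType dT}.
Variable P : probability T R.

Lemma fine_measure_le {A B} : measurable A -> measurable B -> A `<=` B ->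
  fine (P A) <= fine (P B).
Proof.
by move=> mA mB AB; rewrite fine_le ?fin_num_measure//; apply: le_measure; rewrite ?inE.
Qed.

Lemma fine_measureDI {A B} : measurable A -> measurable B ->
  fine (P A) = fine (P (A `&` B)) + fine (P (A `\` B)).
Proof.
move=> mA mB; rewrite (measureDI P mA mB) addrC.
by rewrite fineD ?fin_num_measure//; [exact: measurableI | exact: measurableD].
Qed.

Lemma fine_measureD_eq {A B} : measurable A -> measurable B ->
  fine (P A) = fine (P B) -> fine (P (A `\` B)) = fine (P (B `\` A)).
Proof.
move=> mA mB AB.
have := fine_measureDI mA mB; have := fine_measureDI mB mA.
by rewrite setIC; lra.
Qed.

Lemma fine_indep_preimageI {d1 d2} {U1 : measurableType d1} {U2 : measurableType d2}
    {X1 : T -> U1} {X2 : T -> U2} {A B} :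
  indep P X1 X2 -> measurable_fun setT X1 -> measurable_fun setT X2 ->
  measurable A -> measurable B ->
  fine (P (X1 @^-1` A `&` X2 @^-1` B)) = fine (P (X1 @^-1` A)) * fine (P (X2 @^-1` B)).
Proof.
move=> ind mX1 mX2 mA mB; rewrite ind// fineM// fin_num_measure//;
  exact: measurable_funT_preimage.
Qed.

End fine_probability.

Section limsup_left1.
Context {R : realType}.
Implicit Types (f g : R -> \bar R).

Lemma limsup_left1_le {f g} {p0 : R} : p0 < 1 ->
  (forall p, p0 < p -> p < 1 -> (f p <= g p)%E) ->
  (limsup_left1 f <= limsup_left1 g)%E.
Proof.
move=> p01 fg; apply: le_ereal_inf_tmp => _ [d /andP[d0 d1] <-].
set d' := Num.min d (1 - p0).
have d'0 : 0 < d' by rewrite lt_min d0 subr_gt0.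
have d'd : d' <= d by rewrite ge_min lexx.
have d'p : d' <= 1 - p0 by rewrite ge_min lexx orbT.
apply: (@le_trans _ _ (ereal_sup (f @` [set p | 1 - d' < p < 1]))).
  by apply: ereal_inf_lbound; exists d' => //; apply/andP; split => //; lra.
apply: ge_ereal_sup => _ [p /andP[p1 p2] <-].
apply: (le_trans (fg p _ p2)); first lra.
by apply: ereal_sup_ubound; exists p => //; apply/andP; split => //; lra.
Qed.

Lemma limsup_left1_eq {f g} {p0 : R} : p0 < 1 ->
  (forall p, p0 < p -> p < 1 -> f p = g p) -> limsup_left1 f = limsup_left1 g.
Proof.
move=> p01 fg; apply/eqP; rewrite eq_le.
by apply/andP; split; apply: (limsup_left1_le p01) => p p0p p1; rewrite fg.
Qed.

Lemma cvg_at_left1_ball {f : R -> R} {l : R} : f p @[p --> 1^'-] --> l ->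
  forall e, 0 < e ->
  exists2 d, 0 < d < 1 & forall p, 1 - d < p -> p < 1 -> `|l - f p| < e.
Proof.
move=> fl e e0; have [d /= d0 fd] := (cvgrPdist_lt _ _).1 fl e e0.
exists (Num.min d (1/2)); first by rewrite lt_min d0 /= gt_min; lra.
move=> p p1 p2; apply: fd => //; rewrite /ball_ /= ger0_norm; last lra.
have : Num.min d (1/2) <= d by rewrite ge_min lexx.
lra.
Qed.

Lemma limsup_left1_cvg (f : R -> R) (l : R) : f p @[p --> 1^'-] --> l ->
  limsup_left1 (fun p => (f p)%:E) = l%:E.
Proof.
move=> fl; set L := limsup_left1 _.
have le_up e : 0 < e -> (L <= (l + e)%:E)%E.
  move=> e0; have [d /andP[d0 d1] fd] := cvg_at_left1_ball fl _ e0.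
  apply: (@le_trans _ _ (ereal_sup ((fun p => (f p)%:E) @` [set p | 1 - d < p < 1]))).
    by apply: ereal_inf_lbound; exists d => //; apply/andP.
  apply: ge_ereal_sup => _ [p /andP[p1 p2] <-]; rewrite lee_fin.
  by have := fd p p1 p2; rewrite ltr_norml => /andP[]; lra.
have ge_low e : 0 < e -> ((l - e)%:E <= L)%E.
  move=> e0; have [d /andP[d0 d1] fd] := cvg_at_left1_ball fl _ e0.
  apply: le_ereal_inf_tmp => _ [δ /andP[δ0 δ1] <-].
  have m0 : 0 < Num.min δ d by rewrite lt_min δ0 d0.
  have m1 : Num.min δ d <= δ by rewrite ge_min lexx.
  have m2 : Num.min δ d <= d by rewrite ge_min lexx orbT.
  set p := 1 - Num.min δ d / 2.
  apply: (@le_trans _ _ (f p)%:E); last first.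
    by apply: ereal_sup_ubound; exists p => //; apply/andP; split; rewrite /p; lra.
  rewrite lee_fin; have := fd p _ _; rewrite /p.
  by rewrite ltr_norml => /(_ _ _)/andP[]; lra.
apply/eqP; rewrite eq_le; apply/andP; split.
- by apply/lee_addgt0Pr => e e0; rewrite -EFinD; exact: le_up.
- by apply/lee_addgt0Pr => e e0; rewrite -leeBlDr // -EFinB; exact: ge_low.
Qed.

End limsup_left1.

Section quantile.
Context {R : realType}.

Lemma continuous_inf_level_set_eq (F : R -> R) (p : R) :
  {homo F : x y / x <= y} ->
  [set y | p <= F y] !=set0 -> has_lbound [set y | p <= F y] ->
  {for inf [set y | p <= F y], continuous F} -> F (inf [set y | p <= F y]) = p.
Proof.
set S := [set y | p <= F y]; set c := inf S => Fnd Sne Slb Fc.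
apply/eqP; rewrite eq_le; apply/andP; split.
- apply: (closed_cvg _ (@closed_le _ p) _ _ (cvg_at_left_filter Fc)).
  near=> y; have yc : y < c by near: y; exact: nbhs_left_lt.
  rewrite /= leNgt; apply: contraTN yc => /ltW Sy; rewrite -leNgt; exact: ge_inf.
- apply: (closed_cvg (fun x => p <= x) (@closed_ge _ p) _ _ (cvg_at_right_filter Fc)).
  near=> y; have cy : c < y by near: y; exact: nbhs_right_gt.
  have [s Ss sy] := inf_lt Sne cy.
  exact: le_trans Ss (Fnd _ _ (ltW sy)).
Unshelve. all: by end_near.
Qed.

Context {dT : measure_display} {T : measurableType dT}.
Variables (P : probability T R) (Z : T -> R).
Hypothesis mZ : measurable_fun setT Z.

Local Notation F := (distr_fun P Z).

Lemma distr_fun_nondecreasing : {homo F : x y / x <= y}.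
Proof.
move=> x y xy; apply: fine_measure_le; try exact: measurable_fun_le.
by move=> t /= Zx; exact: le_trans Zx xy.
Qed.

Lemma distr_fun_level_set_nonempty {p} : p < 1 -> [set y | p <= F y] !=set0.
Proof.
move=> p1; have mZ' : Z \in mfun by rewrite inE.
pose ZRV : {RV P >-> R} := mfun_Sub mZ'.
have p1E : (p%:E < 1)%E by rewrite lte_fin.
have [M [_ FM]] := cvg_cdfy1 ZRV (open_ereal_gt' p1E).
exists (M + 1); have := FM (M + 1) ltac:(lra).
rewrite /cdf /distribution /pushforward /= preimage_itvNyc.
rewrite -(fineK (fin_num_measure P _ _)); last exact: measurable_fun_le.
by rewrite lte_fin => /ltW.
Qed.

Lemma exceed_probability p :
  fine (P (exceed P Z p)) = 1 - F (gen_inverse P Z p).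
Proof.
have -> : exceed P Z p = ~` [set t | Z t <= gen_inverse P Z p].
  by rewrite /exceed; apply/seteqP; split => t /=; rewrite ltNge => /negP.
have mle : measurable [set t | Z t <= gen_inverse P Z p] by exact: measurable_fun_le.
by rewrite probability_setC // fineB // fin_num_measure.
Qed.

Lemma gen_inverse_le_upper_end p : p < 1 -> has_lbound [set y | p <= F y] ->
  ((gen_inverse P Z p)%:E <= upper_end P Z)%E.
Proof.
move=> p1 Slb; apply/lee_addgt0Pr => e e0; rewrite -leeBlDr // -EFinB.
apply: ereal_sup_ubound; exists (gen_inverse P Z p - e) => //=.
suff : F (gen_inverse P Z p - e) < p by lra.
rewrite ltNge; apply/negP => /(ge_inf Slb); rewrite -/(gen_inverse P Z p); lra.
Qed.

Lemma exceed_probability_near1 {u} : (u%:E < upper_end P Z)%E ->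
  (forall x, u < x -> (x%:E <= upper_end P Z)%E -> {for x, continuous F}) ->
  exists2 p0, p0 < 1 & forall p, p0 < p -> p < 1 -> fine (P (exceed P Z p)) = 1 - p.
Proof.
move=> uZ Fcont; have [_ [w /= Fw1 <-]] := ereal_sup_gt uZ; rewrite lte_fin => uw.
exists (F w) => // p wp p1.
have Sw : lbound [set y | p <= F y] w.
  move=> y /= Fy; rewrite leNgt; apply/negP => yw.
  by have := distr_fun_nondecreasing _ _ (ltW yw); lra.
have Slb : has_lbound [set y | p <= F y] by exists w.
have wc : w <= gen_inverse P Z p := lb_le_inf (distr_fun_level_set_nonempty p1) Sw.
rewrite exceed_probability /gen_inverse continuous_inf_level_set_eq //.
- exact: distr_fun_nondecreasing.
- exact: distr_fun_level_set_nonempty.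
- by apply: Fcont; [lra | exact: gen_inverse_le_upper_end].
Qed.

End quantile.

Section optimal_predictor.
Context {R : realType} {dT : measure_display} {T : measurableType dT}.
Variable P : probability T R.
Context {d : measure_display} {U : measurableType d}.
Variables (X : T -> U) (eps : T -> R) (h : U -> R).
Hypotheses (mX : measurable_fun setT X) (meps : measurable_fun setT eps)
  (mh : measurable_fun setT h) (ind : indep P X eps).

Let Y t := h (X t) + eps t.

Lemma neyman_pearson_upper_set (G : set U) q c : measurable G ->
  fine (P (X @^-1` G)) = fine (P [set t | c < h (X t)]) ->
  fine (P ([set t | q < Y t] `&` X @^-1` G)) <=
  fine (P ([set t | q < Y t] `&` [set t | c < h (X t)])).
Proof.
move=> mG PG.
set E := [set t | q < Y t]; set H := [set x | c < h x].
set D := `]q - c, +oo[%classic.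
have mH : measurable H by exact: measurable_fun_gt.
have mD : measurable D by exact: measurable_itv.
have mXS S : measurable S -> measurable (X @^-1` S) := measurable_funT_preimage mX.
have mE : measurable E.
  by apply: measurable_fun_gt; apply: measurable_funD => //; exact: measurableT_comp.
have mepsD : measurable (eps @^-1` D) := measurable_funT_preimage meps mD.
have mA := mXS _ mG; have mB := mXS _ mH.
change [set t | c < h (X t)] with (X @^-1` H) in PG |- *.
have out_le : fine (P (E `&` (X @^-1` G `\` X @^-1` H))) <=
              fine (P (X @^-1` (G `\` H) `&` eps @^-1` D)).
  apply: (fine_measure_le P).
  - by apply: measurableI => //; exact: measurableD.
  - by apply: measurableI => //; apply: mXS; exact: measurableD.
  move=> t [Et GnHt]; split => //; rewrite /D /= in_itv /= andbT.
  have hc : h (X t) <= c by rewrite leNgt; apply/negP; case: GnHt.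
  by rewrite /E /Y /= in Et; lra.
have in_ge : fine (P (X @^-1` (H `\` G) `&` eps @^-1` D)) <=
             fine (P (E `&` (X @^-1` H `\` X @^-1` G))).
  apply: (fine_measure_le P).
  - by apply: measurableI => //; apply: mXS; exact: measurableD.
  - by apply: measurableI => //; exact: measurableD.
  move=> t [[/= Ht nGt]]; rewrite /D /= in_itv /= andbT => Dt; split => //.
  by rewrite /E /Y /=; rewrite /H /= in Ht; lra.
have swap : fine (P (X @^-1` (G `\` H) `&` eps @^-1` D)) =
            fine (P (X @^-1` (H `\` G) `&` eps @^-1` D)).
  rewrite !(fine_indep_preimageI P ind mX meps _ mD) //; try exact: measurableD.
  by rewrite (fine_measureD_eq P mA mB PG).
rewrite (fine_measureDI P (measurableI _ _ mE mA) mB).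
rewrite (fine_measureDI P (measurableI _ _ mE mB) mA) setIAC -!setIDA.
lra.
Qed.

Lemma Cp_condprob_exceed_le p g : Cp P X p g -> Cp P X p h ->
  condprob P (exceed P Y p) (exceed P (g \o X) p) <=
  condprob P (exceed P Y p) (exceed P (h \o X) p).
Proof.
move=> [mg gp] [_ hp]; rewrite /condprob gp hp.
apply: ler_wpM2r; first by rewrite -hp invr_ge0 fine_ge0 // measure_ge0.
apply: (neyman_pearson_upper_set [set x | gen_inverse P (g \o X) p < g x]).
  exact: measurable_fun_gt.
by rewrite -[LHS]/(fine (P (exceed P (g \o X) p))) gp -hp.
Qed.

Lemma sup_Cp_condprob_exceed p : Cp P X p h ->
  ereal_sup [set (condprob P (exceed P Y p) (exceed P (g \o X) p))%:E | g in Cp P X p] =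
  (condprob P (exceed P Y p) (exceed P (h \o X) p))%:E.
Proof.
move=> hCp; apply/eqP; rewrite eq_le; apply/andP; split.
- apply: ge_ereal_sup => _ [g gCp <-]; rewrite lee_fin.
  exact: Cp_condprob_exceed_le.
- by apply: ereal_sup_ubound; exists h.
Qed.

End optimal_predictor.

Theorem theorem3 (R : realType) (dT : measure_display) (T : measurableType dT)
  (P : probability T R) (n : nat)
  (X : T -> n.-tuple R) (eps : T -> R) (h : n.-tuple R -> R) :
  measurable_fun setT X -> measurable_fun setT eps -> measurable_fun setT h ->
  indep P X eps ->
  has_lebesgue_density P eps ->
  (exists mu : {measure set (n.-tuple R) -> \bar R},
      sigma_finite setT mu /\ has_density P X mu) ->
  (exists u : R, (u%:E < upper_end P (h \o X))%E /\
     forall x : R, u < x -> (x%:E <= upper_end P (h \o X))%E ->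
       {for x, continuous (distr_fun P (h \o X))}) ->
  lambda_opt P (fun t => h (X t) + eps t) X =
    limsup_left1 (fun p => (condprob P (exceed P (fun t => h (X t) + eps t) p)
                                      (exceed P (h \o X) p))%:E)
  /\
  (forall l : R,
     condprob P (exceed P (fun t => h (X t) + eps t) p) (exceed P (h \o X) p)
       @[p --> 1^'-] --> l ->
     lambda_opt P (fun t => h (X t) + eps t) X = l%:E).
Proof.
move=> mX meps mh ind _ _ [u [uhX hXcont]].
have [p0 p01 hXexceed] :=
  exceed_probability_near1 P (h \o X) (measurableT_comp mh mX) uhX hXcont.
have lambda_optE : lambda_opt P (fun t => h (X t) + eps t) X =
    limsup_left1 (fun p => (condprob P (exceed P (fun t => h (X t) + eps t) p)
                                      (exceed P (h \o X) p))%:E).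
  apply: (limsup_left1_eq p01) => p p0p p1.
  by apply: sup_Cp_condprob_exceed => //; split; [exact: measurableT_comp | exact: hXexceed].
split => // l hl; rewrite lambda_optE; exact: limsup_left1_cvg.
Qed.
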